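(* Let $\mathcal{U}$ be a finite-dimensional real Hilbert space, let $\mathcal{W}$ be a real Hilbert space, let $\phi:\mathcal{U}\to\mathcal{B}(\mathcal{U},\mathcal{W})$ be a map with associated kernel $k(v_1,v_2)=\phi(v_1)^*\phi(v_2)\in\mathcal{B}(\mathcal{U})$, let $(u_i,y_i)\in\mathcal{U}\times\mathcal{U}$, $i=1,\dots,n$, be data and let $\gamma>0$. Let $\Phi\in\mathcal{B}(\mathcal{U}^n,\mathcal{W})$ be $\Phi(v_1,\dots,v_n)=\sum_i\phi(u_i)v_i$; for $u\in\mathcal{U}$ let $\kappa(u)=\Phi^*\phi(u)\in\mathcal{B}(\mathcal{U},\mathcal{U}^n)$, i.e. $\kappa(u)v=(k(u_1,u)v,\dots,k(u_n,u)v)$; let $K_i=\kappa(u_i)$; let $K=\Phi^*\Phi\in\mathcal{B}(\mathcal{U}^n)$ be the Gram operator with $(i,j)$ block $k(u_i,u_j)$, and $K^{1/2}$ its self-adjoint nonnegative square root. Let $L(Q)=\sum_{i=1}^n\|\phi(u_i)^*Q\phi(u_i)u_i-y_i\|_{\mathcal{U}}^2$ for $Q\in\mathcal{B}(\mathcal{W})$. If the problem $\min_{Q\in\mathcal{B}^+(\mathcal{W})}L(Q)+\gamma\|Q\|$ has a solution, then a solution of it is given by $\hat Q=\Phi M\Phi^*$, where $M\in\mathcal{B}^+(\mathcal{U}^n)$ is a solution of $$\min_{M\in\mathcal{B}^+(\mathcal{U}^n)}\ \sum_{i=1}^n\|K_i^*MK_iu_i-y_i\|_{\mathcal{U}}^2+\gamma\|K^{1/2}MK^{1/2}\|.$$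 Moreover, the operator $G:\mathcal{U}\to\mathcal{U}$, $Gu=\phi(u)^*\hat Q\phi(u)u$, corresponding to this solution satisfies $Gu=\kappa(u)^*M\kappa(u)u$ for all $u\in\mathcal{U}$.
   Context: $\mathcal{U}^n$ is the $n$-fold Cartesian product with inner product $\sum_i\langle u_i,v_i\rangle_{\mathcal{U}}$. $\mathcal{B}(\mathcal{X},\mathcal{Y})$ denotes bounded linear operators, $\mathcal{B}(\mathcal{X})=\mathcal{B}(\mathcal{X},\mathcal{X})$, $^*$ is the adjoint, $\|\cdot\|$ the operator norm. An operator $G$ on a Hilbert space $\mathcal{H}$ is nonnegative if $\langle Gu,u\rangle_{\mathcal{H}}\ge0$ for all $u$ (self-adjointness not required); $\mathcal{B}^+(\mathcal{H})$ is the set of nonnegative operators in $\mathcal{B}(\mathcal{H})$. *)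

From HB Require Import structures.
From mathcomp Require Import all_boot all_order all_algebra.
From mathcomp Require Import boolp classical_sets reals.
Set Implicit Arguments. Unset Strict Implicit. Unset Printing Implicit Defensive.
Import Order.TTheory GRing.Theory Num.Theory.
Local Open Scope ring_scope.
Local Open Scope classical_set_scope.

Section Hilbert.
Variable R : realType.

Definition is_inner_product (V : lmodType R) (ip : V -> V -> R) : Prop :=
  [/\ (forall x y, ip x y = ip y x),
      (forall a x y z, ip (a *: x + y) z = a * ip x z + ip y z),
      (forall x, 0 <= ip x x) &
      (forall x, ip x x = 0 -> x = 0)].

Definition ipnorm (V : lmodType R) (ip : V -> V -> R) (x : V) : R :=
  Num.sqrt (ip x x).

Definition is_hilbert (V : lmodType R) (ip : V -> V -> R) : Prop :=
  is_inner_product ip /\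
  forall s : nat -> V,
    (forall e : R, 0 < e -> exists N : nat, forall m k : nat, (N <= m)%N -> (N <= k)%N ->
        ipnorm ip (s m - s k) < e) ->
    exists l : V, forall e : R, 0 < e -> exists N : nat, forall m : nat, (N <= m)%N ->
        ipnorm ip (s m - l) < e.

Definition is_bounded_op (V W : lmodType R) (ipV : V -> V -> R) (ipW : W -> W -> R)
  (A : V -> W) : Prop :=
  (forall a x y, A (a *: x + y) = a *: A x + A y) /\
  exists C : R, forall x, ipnorm ipW (A x) <= C * ipnorm ipV x.

Definition opnorm (V W : lmodType R) (ipV : V -> V -> R) (ipW : W -> W -> R)
  (A : V -> W) : R :=
  sup [set ipnorm ipW (A x) | x in [set x : V | ipnorm ipV x <= 1]].

Definition adjoint (V W : lmodType R) (ipV : V -> V -> R) (ipW : W -> W -> R)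
  (A : V -> W) : W -> V :=
  fun w => xget 0 [set v : V | forall x, ipV v x = ipW w (A x)].

(* nonnegative operator (self-adjointness not required) *)
Definition is_nonneg_op (V : lmodType R) (ip : V -> V -> R) (G : V -> V) : Prop :=
  forall u, 0 <= ip (G u) u.

Definition is_Bplus (V : lmodType R) (ip : V -> V -> R) (G : V -> V) : Prop :=
  is_bounded_op ip ip G /\ is_nonneg_op ip G.

Definition op_sqrt (V : lmodType R) (ip : V -> V -> R) (K : V -> V) : V -> V :=
  xget (fun _ => 0) [set S : V -> V | [/\ is_bounded_op ip ip S,
        adjoint ip ip S = S, is_nonneg_op ip S & S \o S = K]].

Definition ip_pow (U : lmodType R) (ipU : U -> U -> R) (n : nat)
  (v w : {ffun 'I_n -> U}) : R := \sum_(i < n) ipU (v i) (w i).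

End Hilbert.

(* The data term sees Q only through <Q (Phi x), Phi x'>, hence only through the
   compression P Q P of Q to the finite-dimensional range of Phi, and compressing
   does not increase the operator norm; so a minimiser Q may be replaced by P Q P.
   Every such compression is Phi M Phi^* with M = Phi^+ Q Phi^+* nonnegative, where
   Phi^+ is the pseudo-inverse.  Conversely, the objective at Phi M Phi^* is the
   objective of the problem in M: the data terms agree because
   kappa(u)^* = phi(u)^* Phi, and ||Phi M Phi^*|| = ||K^1/2 M K^1/2|| because the
   polar decomposition Phi = J K^1/2 has a partial isometry J.  The spectral theorem
   in finite dimension, obtained from a complex eigenvalue of a real symmetric
   matrix, provides K^1/2, J and Phi^+. *)

From HB Require Import structures.
From mathcomp Require Import all_boot all_order all_algebra.
From mathcomp Require Import boolp classical_sets reals.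
From mathcomp Require Import complex.
From mathcomp Require Import ring lra.
Set Implicit Arguments. Unset Strict Implicit. Unset Printing Implicit Defensive.
Import Order.TTheory GRing.Theory Num.Theory.
Local Open Scope ring_scope.
Local Open Scope classical_set_scope.

Definition is_linear (R : realType) (V W : lmodType R) (A : V -> W) : Prop :=
  forall a x y, A (a *: x + y) = a *: A x + A y.

Section Linear.
Variables (R : realType) (V W : lmodType R) (A : V -> W).
Hypothesis hA : is_linear A.

Lemma is_linear0 : A 0 = 0.
Proof.
have := hA 1 0 0; rewrite !scale1r addr0 => /(congr1 (fun z => z - A 0)).
by rewrite addrK subrr.
Qed.

Lemma is_linearD x y : A (x + y) = A x + A y.
Proof. by have := hA 1 x y; rewrite !scale1r. Qed.

Lemma is_linearZ a x : A (a *: x) = a *: A x.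
Proof. by have := hA a x 0; rewrite !addr0 is_linear0 addr0. Qed.

Lemma is_linearB x y : A (x - y) = A x - A y.
Proof. by rewrite is_linearD -scaleN1r is_linearZ scaleN1r. Qed.

Lemma is_linear_sum I (r : seq I) (P : pred I) (F : I -> V) :
  A (\sum_(i <- r | P i) F i) = \sum_(i <- r | P i) A (F i).
Proof. exact: (big_morph A is_linearD is_linear0). Qed.

End Linear.

Lemma is_linear_comp (R : realType) (U V W : lmodType R) (A : V -> W) (B : U -> V) :
  is_linear A -> is_linear B -> is_linear (A \o B).
Proof. by move=> hA hB a x y /=; rewrite hB hA. Qed.

Section ExtendFamily.
Variable T : Type.

Definition extend_fam (k : nat) (e : 'I_k -> T) (x : T) : 'I_k.+1 -> T :=
  fun i => if unlift ord_max i is Some j then e j else x.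

Lemma extend_fam_lift (k : nat) (e : 'I_k -> T) x (j : 'I_k) :
  extend_fam e x (lift ord_max j) = e j.
Proof. by rewrite /extend_fam liftK. Qed.

Lemma extend_fam_max (k : nat) (e : 'I_k -> T) x : extend_fam e x ord_max = x.
Proof. by rewrite /extend_fam unlift_none. Qed.

End ExtendFamily.

Section InnerProduct.
Variables (R : realType) (V : lmodType R) (ip : V -> V -> R).
Hypothesis hip : is_inner_product ip.

Lemma ipC x y : ip x y = ip y x. Proof. by case: hip. Qed.
Lemma ip_ge0 x : 0 <= ip x x. Proof. by case: hip. Qed.
Lemma ip_eq0 x : ip x x = 0 -> x = 0. Proof. by case: hip => _ _ _; apply. Qed.

Lemma ipl_linear z : is_linear (fun x : V => (ip x z : R^o)).
Proof. by case: hip => _ h _ _ a x y; rewrite h. Qed.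

Lemma ipr_linear z : is_linear (fun x : V => (ip z x : R^o)).
Proof. by move=> a x y; rewrite !(ipC z); apply: ipl_linear. Qed.

Lemma ip0l z : ip 0 z = 0. Proof. exact: (is_linear0 (ipl_linear z)). Qed.
Lemma ipDl x y z : ip (x + y) z = ip x z + ip y z.
Proof. exact: (is_linearD (ipl_linear z)). Qed.
Lemma ipDr x y z : ip z (x + y) = ip z x + ip z y.
Proof. exact: (is_linearD (ipr_linear z)). Qed.
Lemma ipZl a x z : ip (a *: x) z = a * ip x z.
Proof. exact: (is_linearZ (ipl_linear z)). Qed.
Lemma ipZr a x z : ip z (a *: x) = a * ip z x.
Proof. exact: (is_linearZ (ipr_linear z)). Qed.
Lemma ipBl x y z : ip (x - y) z = ip x z - ip y z.
Proof. exact: (is_linearB (ipl_linear z)). Qed.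
Lemma ipBr x y z : ip z (x - y) = ip z x - ip z y.
Proof. exact: (is_linearB (ipr_linear z)). Qed.
Lemma ip_suml I (r : seq I) (P : pred I) (F : I -> V) z :
  ip (\sum_(i <- r | P i) F i) z = \sum_(i <- r | P i) ip (F i) z.
Proof. exact: (is_linear_sum (ipl_linear z)). Qed.
Lemma ip_sumr I (r : seq I) (P : pred I) (F : I -> V) z :
  ip z (\sum_(i <- r | P i) F i) = \sum_(i <- r | P i) ip z (F i).
Proof. exact: (is_linear_sum (ipr_linear z)). Qed.
Lemma ip_sumZl I (r : seq I) (P : pred I) (c : I -> R) (F : I -> V) z :
  ip (\sum_(i <- r | P i) c i *: F i) z = \sum_(i <- r | P i) c i * ip (F i) z.
Proof. by rewrite ip_suml; apply: eq_bigr => i _; rewrite ipZl. Qed.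
Lemma ip_sumZr I (r : seq I) (P : pred I) (c : I -> R) (F : I -> V) z :
  ip z (\sum_(i <- r | P i) c i *: F i) = \sum_(i <- r | P i) c i * ip z (F i).
Proof. by rewrite ip_sumr; apply: eq_bigr => i _; rewrite ipZr. Qed.

Lemma ip_ext x y : (forall z, ip x z = ip y z) -> x = y.
Proof.
move=> h; apply/eqP; rewrite -subr_eq0; apply/eqP/ip_eq0.
by rewrite ipBl h subrr.
Qed.

Lemma ipnorm_ge0 x : 0 <= ipnorm ip x. Proof. exact: sqrtr_ge0. Qed.

Definition selfadjoint (T : V -> V) : Prop := forall x y, ip (T x) y = ip x (T y).

Lemma selfadjoint_linear T : selfadjoint T -> is_linear T.
Proof.
move=> hT a x y; apply: ip_ext => z.
by rewrite hT ipDl ipZl -!hT ipDl ipZl.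
Qed.

Definition is_orthonormal (k : nat) (e : 'I_k -> V) : Prop :=
  forall i j, ip (e i) (e j) = (i == j)%:R.

Lemma sum_mul_delta (k : nat) (c : 'I_k -> R) j : \sum_i c i * (i == j)%:R = c j.
Proof.
rewrite (bigD1 j) //= eqxx mulr1 big1 ?addr0 // => i /negbTE ->.
by rewrite mulr0.
Qed.

Lemma orthonormal_coef (k : nat) (e : 'I_k -> V) (c : 'I_k -> R) j :
  is_orthonormal e -> ip (\sum_i c i *: e i) (e j) = c j.
Proof.
by move=> he; rewrite ip_sumZl; under eq_bigr do rewrite he; apply: sum_mul_delta.
Qed.

Lemma orthonormal_ip_sum (k : nat) (e : 'I_k -> V) (c d : 'I_k -> R) :
  is_orthonormal e -> ip (\sum_i c i *: e i) (\sum_i d i *: e i) = \sum_i c i * d i.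
Proof.
by move=> he; rewrite ip_sumZr; apply: eq_bigr => i _; rewrite orthonormal_coef // mulrC.
Qed.

Lemma orthonormal_extend (k : nat) (e : 'I_k -> V) x :
  is_orthonormal e -> (forall i, ip x (e i) = 0) -> ip x x = 1 ->
  is_orthonormal (extend_fam e x).
Proof.
move=> he hx hxx i j.
case: (unliftP ord_max i) => [i'|] ->; case: (unliftP ord_max j) => [j'|] ->;
  rewrite ?extend_fam_lift ?extend_fam_max.
- by rewrite he (inj_eq (@lift_inj _ _)).
- by rewrite ipC hx eq_sym (negbTE (neq_lift _ _)).
- by rewrite hx (negbTE (neq_lift _ _)).
- by rewrite hxx eqxx.
Qed.

Lemma unit_multiple x : x != 0 -> exists a : R, ip (a *: x) (a *: x) = 1.
Proof.
move=> x0; have hpos : 0 < ip x x.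
  by rewrite lt_def ip_ge0 andbT; apply: contra x0 => /eqP/ip_eq0 ->.
exists (Num.sqrt (ip x x))^-1.
rewrite ipZl ipZr mulrA -expr2 exprVn sqr_sqrtr ?ip_ge0 // mulVf //.
by rewrite gt_eqF.
Qed.

End InnerProduct.

Section RealSymmetric.
Variable R : realType.

Lemma Re_sum I (r : seq I) (P : pred I) (F : I -> R[i]) :
  complex.Re (\sum_(i <- r | P i) F i) = \sum_(i <- r | P i) complex.Re (F i).
Proof. by apply: (big_morph (@complex.Re R)) => // -[a b] [c d]. Qed.

Lemma Im_sum I (r : seq I) (P : pred I) (F : I -> R[i]) :
  complex.Im (\sum_(i <- r | P i) F i) = \sum_(i <- r | P i) complex.Im (F i).
Proof. by apply: (big_morph (@complex.Im R)) => // -[a b] [c d]. Qed.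

Lemma rowmxT_ge0 (m : nat) (x : 'rV[R]_m) : 0 <= (x *m x^T) 0 0.
Proof. by rewrite mxE sumr_ge0 // => k _; rewrite mxE -expr2 sqr_ge0. Qed.

Lemma rowmxT_eq0 (m : nat) (x : 'rV[R]_m) : (x *m x^T) 0 0 = 0 -> x = 0.
Proof.
rewrite mxE => h; apply/rowP => j; rewrite mxE.
have hge (k : 'I_m) : true -> 0 <= x 0 k * x^T k 0.
  by move=> _; rewrite mxE -expr2 sqr_ge0.
have := @psumr_eq0P _ _ _ _ hge h j isT.
by rewrite mxE => /eqP; rewrite mulf_eq0 orbb => /eqP.
Qed.

Lemma symmetric_rotation_trivial (m : nat) (A : 'M[R]_m) (x y : 'rV[R]_m) (a b : R) :
  A^T = A -> x *m A = a *: x - b *: y -> y *m A = a *: y + b *: x ->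
  b = 0 \/ x = 0 /\ y = 0.
Proof.
move=> hA hx hy.
have hsym : (x *m A) *m y^T = x *m (y *m A)^T by rewrite trmx_mul hA mulmxA.
have hb : b * ((x *m x^T) 0 0 + (y *m y^T) 0 0) = 0.
  move: hsym; rewrite hx hy mulmxBl linearD /= !linearZ /= mulmxDr -!scalemxAl -!scalemxAr.
  move: (x *m y^T) (y *m y^T) (x *m x^T) => XY YY XX /(congr1 (fun M : 'M_1 => M 0 0)).
  rewrite !mxE => h.
  have -> : b * (XX 0 0 + YY 0 0) = (a * XY 0 0 + b * XX 0 0) - (a * XY 0 0 - b * YY 0 0).
    by ring.
  by rewrite h subrr.
move/eqP: hb; rewrite mulf_eq0 paddr_eq0 ?rowmxT_ge0 //.
by case/orP => [/eqP|/andP [/eqP/rowmxT_eq0 ? /eqP/rowmxT_eq0 ?]]; [left | right].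
Qed.

(* The real and imaginary parts of a complex eigenvector of A. *)
Lemma symmetric_eigenvector (m : nat) (A : 'M[R]_m.+1) : A^T = A ->
  exists2 w : 'rV[R]_m.+1, w != 0 & exists a : R, w *m A = a *: w.
Proof.
move=> hA.
have [[a b] /eigenvalueP [v hv v0]] := eigenvalue_closed (map_mx (real_complex R) A) (ltn0Sn m).
pose x := \row_j complex.Re (v 0 j).
pose y := \row_j complex.Im (v 0 j).
have hent j : \sum_k v 0 k * ((A k j)%:C)%C = (a +i* b)%C * v 0 j.
  have := congr1 (fun M : 'M_(1, m.+1) => M 0 j) hv; rewrite /= !mxE => <-.
  by apply: eq_bigr => k _; rewrite mxE.
have hx : x *m A = a *: x - b *: y.
  apply/rowP => j; rewrite !mxE.
  have -> : a * complex.Re (v 0 j) - b * complex.Im (v 0 j)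
    = complex.Re ((a +i* b)%C * v 0 j) by case: (v 0 j).
  rewrite -hent Re_sum; apply: eq_bigr => k _.
  by rewrite !mxE; case: (v 0 k) => p q /=; rewrite mulr0 subr0.
have hy : y *m A = a *: y + b *: x.
  apply/rowP => j; rewrite !mxE.
  have -> : a * complex.Im (v 0 j) + b * complex.Re (v 0 j)
    = complex.Im ((a +i* b)%C * v 0 j) by case: (v 0 j) => p q /=; ring.
  rewrite -hent Im_sum; apply: eq_bigr => k _.
  by rewrite !mxE; case: (v 0 k) => p q /=; rewrite mulr0 add0r.
have xy0 : ~ (x = 0 /\ y = 0).
  move=> [/rowP x0 /rowP y0]; move/eqP: v0; apply; apply/rowP => j; rewrite mxE.
  by have := x0 j; have := y0 j; rewrite !mxE; case: (v 0 j) => p q /= -> ->.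
have [b0|//] := symmetric_rotation_trivial hA hx hy.
rewrite b0 scale0r subr0 in hx; rewrite b0 scale0r addr0 in hy.
have [x0|xn0] := eqVneq x 0; last by exists x => //; exists a.
by exists y; [apply/eqP => y0; apply: xy0 | exists a].
Qed.

End RealSymmetric.

Lemma ex_last_bounded (P : nat -> Prop) (N : nat) :
  P 0%N -> (forall k, P k -> (k <= N)%N) -> exists k, P k /\ ~ P k.+1.
Proof.
move=> P0 hb; apply: contrapT => hn.
have hall k : P k by elim: k => // k IH; apply: contrapT => hk; apply: hn; exists k.
by have := hb _ (hall N.+1); rewrite ltnn.
Qed.

Section FiniteDim.
Variables (R : realType) (V : vectType R) (ip : V -> V -> R).
Hypothesis hip : is_inner_product ip.

Lemma orthonormal_size_le_dim (k : nat) (e : 'I_k -> V) :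
  is_orthonormal ip e -> (k <= \dim (fullv : {vspace V}))%N.
Proof.
move=> he; have hfree : free [tuple e i | i < k].
  apply/freeP => c hc i; have := congr1 (fun z => ip z (e i)) hc.
  rewrite /= ip0l //; under eq_bigr do rewrite nth_mktuple.
  by rewrite orthonormal_coef.
by move: hfree; rewrite /free size_tuple => /eqP <-; apply: dimvS; apply: subvf.
Qed.

(* A maximal orthonormal family orthogonal to e exists by the dimension bound;
   by maximality it spans the orthogonal complement of e. *)
Lemma orthonormal_complement (k : nat) (e : 'I_k -> V) : is_orthonormal ip e ->
  exists m (c : 'I_m -> V), [/\ is_orthonormal ip c,
    (forall j i, ip (c j) (e i) = 0) &
    forall x, (forall i, ip x (e i) = 0) -> x = \sum_j ip x (c j) *: c j].
Proof.
move=> he.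
pose P m := exists c : 'I_m -> V, is_orthonormal ip c /\ forall j i, ip (c j) (e i) = 0.
have P0 : P 0%N by exists (fun _ => 0); split; case.
have Pb m : P m -> (m <= \dim (fullv : {vspace V}))%N.
  by move=> [c [hc _]]; apply: orthonormal_size_le_dim hc.
have [m [[c [hc hce]] hmax]] := ex_last_bounded P0 Pb.
exists m, c; split => // x hx.
apply/eqP; rewrite -subr_eq0; apply/eqP; set z := (X in X = 0).
have hzc j : ip z (c j) = 0 by rewrite ipBl // orthonormal_coef // subrr.
have hze i : ip z (e i) = 0.
  by rewrite ipBl // hx ip_sumZl // big1 ?subrr // => j _; rewrite hce mulr0.
apply: contrapT => /eqP zn0; apply: hmax.
have [a hz1] := unit_multiple hip zn0.
exists (extend_fam c (a *: z)); split.
  by apply: orthonormal_extend => // j; rewrite ipZl // hzc mulr0.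
move=> j i; case: (unliftP ord_max j) => [j'|] ->.
  by rewrite extend_fam_lift hce.
by rewrite extend_fam_max ipZl // hze mulr0.
Qed.

Lemma exists_orthonormal_basis : exists d (b : 'I_d -> V),
  is_orthonormal ip b /\ forall x, x = \sum_i ip x (b i) *: b i.
Proof.
have [|d [b [hb _ hx]]] := @orthonormal_complement 0 (fun _ => 0); first by case.
by exists d, b; split => // x; apply: hx; case.
Qed.

(* T leaves the orthogonal complement of e invariant, and the symmetric matrix
   of T on that complement has a real eigenvector. *)
Lemma selfadjoint_eigenvector_perp (T : V -> V) (k : nat) (e : 'I_k -> V) (l : 'I_k -> R) z :
  selfadjoint ip T -> is_orthonormal ip e -> (forall i, T (e i) = l i *: e i) ->
  z != 0 -> (forall i, ip z (e i) = 0) ->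
  exists v a, [/\ ip v v = 1, forall i, ip v (e i) = 0 & T v = a *: v].
Proof.
move=> hs he hTe zn0 hz; have hT := selfadjoint_linear hip hs.
have [m [c [hc hce hcomp]]] := orthonormal_complement he.
case: m c hc hce hcomp => [|m] c hc hce hcomp.
  by move: zn0; rewrite (hcomp z hz) big_ord0 eqxx.
pose A := \matrix_(i, j) ip (T (c i)) (c j) : 'M[R]_m.+1.
have hA : A^T = A by apply/matrixP => i j; rewrite !mxE hs ipC.
have [w w0 [a hw]] := symmetric_eigenvector hA.
pose v := \sum_j w 0 j *: c j.
have hvc j : ip v (c j) = w 0 j by rewrite orthonormal_coef.
have hve i : ip v (e i) = 0.
  by rewrite ip_sumZl // big1 // => j _; rewrite hce mulr0.
have hTve i : ip (T v) (e i) = 0 by rewrite hs hTe ipZr // hve mulr0.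
have hTv : T v = a *: v.
  rewrite (hcomp _ hTve) /v scaler_sumr; apply: eq_bigr => j _.
  rewrite scalerA; congr (_ *: _).
  have := congr1 (fun M : 'M_(1, m.+1) => M 0 j) hw; rewrite /= !mxE => <-.
  rewrite (is_linear_sum hT) ip_suml //; apply: eq_bigr => i _.
  by rewrite (is_linearZ hT) ipZl // mxE.
have vn0 : v != 0.
  by apply: contra w0 => /eqP v0; apply/eqP/rowP => j; rewrite -hvc v0 ip0l // mxE.
have [r hv1] := unit_multiple hip vn0.
exists (r *: v), a; split=> // [i|]; first by rewrite ipZl // hve mulr0.
by rewrite (is_linearZ hT) hTv !scalerA mulrC.
Qed.

Lemma selfadjoint_eigenbasis (T : V -> V) : selfadjoint ip T ->
  exists d (e : 'I_d -> V) (l : 'I_d -> R), [/\ is_orthonormal ip e,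
    (forall i, T (e i) = l i *: e i) & forall x, x = \sum_i ip x (e i) *: e i].
Proof.
move=> hs.
pose P k := exists (e : 'I_k -> V) (l : 'I_k -> R),
  is_orthonormal ip e /\ forall i, T (e i) = l i *: e i.
have P0 : P 0%N by exists (fun _ => 0), (fun _ => 0); split; case.
have Pb k : P k -> (k <= \dim (fullv : {vspace V}))%N.
  by move=> [e [_ [he _]]]; apply: orthonormal_size_le_dim he.
have [k [[e [l [he hTe]]] hmax]] := ex_last_bounded P0 Pb.
exists k, e, l; split => // x; apply/eqP; rewrite -subr_eq0; apply/eqP.
set z := (X in X = 0).
have hz i : ip z (e i) = 0 by rewrite ipBl // orthonormal_coef // subrr.
apply: contrapT => /eqP zn0; apply: hmax.
have [v [a [hv1 hve hTv]]] := selfadjoint_eigenvector_perp hs he hTe zn0 hz.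
exists (extend_fam e v), (extend_fam l a); split.
  exact: orthonormal_extend.
by move=> i; case: (unliftP ord_max i) => [i'|] ->;
  rewrite ?extend_fam_lift ?extend_fam_max.
Qed.

End FiniteDim.

Section Adjoint.
Variables (R : realType) (V : vectType R) (ipV : V -> V -> R).
Hypothesis hipV : is_inner_product ipV.
Variables (W : lmodType R) (ipW : W -> W -> R).
Hypothesis hipW : is_inner_product ipW.

Lemma adjointP (A : V -> W) : is_linear A ->
  forall w x, ipV (adjoint ipV ipW A w) x = ipW w (A x).
Proof.
move=> hA w; apply: (@xgetPex _ 0 [set v | forall x, ipV v x = ipW w (A x)]).
have [d [b [hb hx]]] := exists_orthonormal_basis hipV.
exists (\sum_j ipW w (A (b j)) *: b j) => x.
rewrite ip_sumZl // {2}(hx x) (is_linear_sum hA) ip_sumr //; apply: eq_bigr => j _.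
by rewrite (is_linearZ hA) (ipZr hipW) (ipC hipV (b j)) mulrC.
Qed.

Lemma adjoint_linear (A : V -> W) : is_linear A -> is_linear (adjoint ipV ipW A).
Proof.
move=> hA a w w'; apply: (ip_ext hipV) => z.
by rewrite ipDl // ipZl // !adjointP // ipDl // ipZl.
Qed.

(* Expanding x in an orthonormal basis b, |A x|^2 = sum_jk c_j c_k <A b_j, A b_k>
   with |c_j c_k| <= c_j^2 + c_k^2 <= 2 |x|^2. *)
Lemma linear_bounded (A : V -> W) : is_linear A ->
  exists2 C, 0 <= C & forall x, ipnorm ipW (A x) <= C * ipnorm ipV x.
Proof.
move=> hA; have [d [b [hb hx]]] := exists_orthonormal_basis hipV.
pose g j k := ipW (A (b j)) (A (b k)).
pose G := \sum_j \sum_k `|g j k|.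
have G0 : 0 <= G by rewrite sumr_ge0 // => j _; rewrite sumr_ge0.
exists (Num.sqrt (2 * G)); first exact: sqrtr_ge0.
move=> x; rewrite /ipnorm -sqrtrM ?mulr_ge0 // ler_sqrt ?mulr_ge0 ?ip_ge0 //.
pose c j := ipV x (b j).
have hcx j : c j ^+ 2 <= ipV x x.
  rewrite {2}(hx x) ip_sumZr // (bigD1 j) //= -expr2 lerDl.
  by rewrite sumr_ge0 // => i _; rewrite -expr2 sqr_ge0.
rewrite {1 2}(hx x) (is_linear_sum hA) ip_suml // mulrAC /G mulr_sumr.
apply: ler_sum => j _; rewrite ip_sumr // mulr_sumr; apply: ler_sum => k _.
rewrite !(is_linearZ hA) ipZl // ipZr // -/(c j) -/(c k) -/(g j k).
apply: (le_trans (y := `|c j| * `|c k| * `|g j k|)).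
  by rewrite -!normrM mulrA ler_norm.
apply: ler_wpM2r => //.
have := hcx j; have := hcx k; rewrite -(real_normK (num_real (c k))).
rewrite -(real_normK (num_real (c j))).
have := normr_ge0 (c k); have := normr_ge0 (c j); nra.
Qed.

End Adjoint.

Lemma adjoint_comp (R : realType) (U V : vectType R) (W : lmodType R)
  (ipU : U -> U -> R) (ipV : V -> V -> R) (ipW : W -> W -> R)
  (hU : is_inner_product ipU) (hV : is_inner_product ipV) (hW : is_inner_product ipW)
  (Phi : V -> W) (A : U -> W) : is_linear Phi -> is_linear A ->
  forall y, adjoint ipU ipV (adjoint ipV ipW Phi \o A) y = adjoint ipU ipW A (Phi y).
Proof.
move=> hPhi hA y; apply: (ip_ext hU) => x.
have hk := is_linear_comp (adjoint_linear hV hW hPhi) hA.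
rewrite (adjointP hU hV hk) (adjointP hU hW hA) /= (ipC hV) (adjointP hV hW hPhi).
exact: ipC.
Qed.

Section SquareRoot.
Variables (R : realType) (V : vectType R) (ip : V -> V -> R).
Hypothesis hip : is_inner_product ip.

Lemma bounded_of_linear (T : V -> V) : is_linear T -> is_bounded_op ip ip T.
Proof. by move=> hT; split => //; have [C _ hC] := linear_bounded hip hip hT; exists C. Qed.

Lemma adjoint_selfadjoint (T : V -> V) : selfadjoint ip T -> adjoint ip ip T = T.
Proof.
move=> hs; apply/funext => w; apply: (ip_ext hip) => z.
by rewrite (adjointP hip hip (selfadjoint_linear hip hs)) hs.
Qed.

Lemma selfadjoint_adjoint (T : V -> V) : is_linear T -> adjoint ip ip T = T ->
  selfadjoint ip T.
Proof. by move=> hT hTT x y; rewrite -{1}hTT adjointP. Qed.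

Lemma op_sqrtP (K : V -> V) : selfadjoint ip K -> is_nonneg_op ip K ->
  [/\ is_bounded_op ip ip (op_sqrt ip K), adjoint ip ip (op_sqrt ip K) = op_sqrt ip K,
      is_nonneg_op ip (op_sqrt ip K) & op_sqrt ip K \o op_sqrt ip K = K].
Proof.
move=> hs hp; apply: (xgetPex (fun _ => 0) (P := [set S | [/\ is_bounded_op ip ip S,
  adjoint ip ip S = S, is_nonneg_op ip S & S \o S = K]])).
have [d [e [l [he hKe hexp]]]] := selfadjoint_eigenbasis hip hs.
have l_ge0 j : 0 <= l j by have := hp (e j); rewrite hKe ipZl // he eqxx mulr1.
pose S x := \sum_j (Num.sqrt (l j) * ip x (e j)) *: e j.
have hSe x j : ip (S x) (e j) = Num.sqrt (l j) * ip x (e j) by rewrite orthonormal_coef.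
have hSs : selfadjoint ip S.
  move=> x y; rewrite ip_sumZl // ip_sumZr //; apply: eq_bigr => j _.
  by rewrite (ipC hip (e j) y); ring.
exists S; split.
- exact: bounded_of_linear (selfadjoint_linear hip hSs).
- exact: adjoint_selfadjoint.
- move=> x; rewrite ip_sumZl //; apply: sumr_ge0 => j _.
  by rewrite (ipC hip (e j) x) -mulrA -expr2 mulr_ge0 ?sqrtr_ge0 ?sqr_ge0.
- apply/funext => x /=; rewrite [RHS]hexp; apply: eq_bigr => j _.
  by rewrite hSe mulrA -expr2 sqr_sqrtr // hs hKe ipZr.
Qed.

End SquareRoot.

Section OperatorNorm.
Variables (R : realType) (X Y : lmodType R) (ipX : X -> X -> R) (ipY : Y -> Y -> R).
Hypothesis hipX : is_inner_product ipX.

Lemma opnorm_ub (A : X -> Y) C :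
  (forall x, ipnorm ipY (A x) <= C * ipnorm ipX x) ->
  forall x, ipnorm ipX x <= 1 -> ipnorm ipY (A x) <= opnorm ipX ipY A.
Proof.
move=> hC x hx; apply: ub_le_sup; last by exists x.
exists `|C| => _ [z hz <-]; apply: (le_trans (hC z)).
have hz0 := ipnorm_ge0 ipX z.
apply: (le_trans (y := `|C| * ipnorm ipX z)); first by rewrite ler_wpM2r // ler_norm.
by rewrite ler_piMr.
Qed.

Lemma opnorm_le (A : X -> Y) B :
  (forall x, ipnorm ipX x <= 1 -> ipnorm ipY (A x) <= B) -> opnorm ipX ipY A <= B.
Proof.
move=> h; apply: ge_sup; last by move=> _ [z hz <-]; apply: h.
by exists (ipnorm ipY (A 0)), 0 => //=; rewrite /ipnorm ip0l // sqrtr0 ler01.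
Qed.

End OperatorNorm.

Section Polar.
Variables (R : realType) (V : vectType R) (ipV : V -> V -> R).
Hypothesis hipV : is_inner_product ipV.
Variables (W : lmodType R) (ipW : W -> W -> R).
Hypothesis hipW : is_inner_product ipW.
Variables (Phi : V -> W) (S : V -> V).
Hypothesis hPhi : is_linear Phi.
Local Notation Pa := (adjoint ipV ipW Phi).
Hypotheses (hSs : selfadjoint ipV S) (hSS : forall x, S (S x) = Pa (Phi x)).
Variables (d : nat) (e : 'I_d -> V) (sg : 'I_d -> R).
Hypotheses (he : is_orthonormal ipV e) (hSe : forall j, S (e j) = sg j *: e j)
  (hexp : forall x, x = \sum_j ipV x (e j) *: e j).

Lemma ip_Phi x y : ipW (Phi x) (Phi y) = ipV (S x) (S y).
Proof. by rewrite -(adjointP hipV hipW hPhi) -hSS hSs. Qed.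

Lemma ipnorm_Phi x : ipnorm ipW (Phi x) = ipnorm ipV (S x).
Proof. by rewrite /ipnorm ip_Phi. Qed.

(* As 0^-1 = 0, [supp j] is 1 when sg j != 0 and 0 otherwise; the family
   [frame] is orthonormal on the support and spans the range of Phi. *)
Definition supp j := (sg j)^-1 * sg j.
Definition frame j := (sg j)^-1 *: Phi (e j).

Lemma supp01 j : supp j = 0 \/ supp j = 1.
Proof.
by rewrite /supp; have [->|/mulVf ->] := eqVneq (sg j) 0; [rewrite mulr0; left | right].
Qed.

Lemma supp_idem j : supp j * supp j = supp j.
Proof. by case: (supp01 j) => ->; rewrite ?mul0r ?mul1r. Qed.

Lemma sg_supp j : sg j * supp j = sg j.
Proof.
by rewrite /supp; have [->|/mulVf ->] := eqVneq (sg j) 0; rewrite ?mul0r ?mulr1.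
Qed.

Lemma Phi_e j : Phi (e j) = sg j *: frame j.
Proof.
rewrite /frame scalerA; have [sg0|/mulfV ->] := eqVneq (sg j) 0; last by rewrite scale1r.
by rewrite sg0 mul0r scale0r; apply: (ip_eq0 hipW); rewrite ip_Phi hSe sg0 scale0r ip0l.
Qed.

Lemma frame_orth j k : ipW (frame j) (frame k) = (j == k)%:R * supp j.
Proof.
rewrite /frame ipZl // ipZr // ip_Phi !hSe ipZl // ipZr // he.
have [<-|_] := eqVneq j k; last by rewrite !mulr0 mul0r.
by rewrite -supp_idem /supp; ring.
Qed.

Lemma ip_sum_frame (a : 'I_d -> R) k :
  ipW (\sum_j a j *: frame j) (frame k) = a k * supp k.
Proof.
rewrite ip_sumZl //; under eq_bigr do rewrite frame_orth mulrCA mulrC.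
exact: sum_mul_delta.
Qed.

Lemma Phi_expansion x : Phi x = \sum_j (ipV x (e j) * sg j) *: frame j.
Proof.
rewrite {1}(hexp x) (is_linear_sum hPhi); apply: eq_bigr => j _.
by rewrite (is_linearZ hPhi) Phi_e scalerA.
Qed.

Lemma ip_adjoint_e w j : ipV (Pa w) (e j) = sg j * ipW w (frame j).
Proof. by rewrite (adjointP hipV hipW hPhi) Phi_e ipZr. Qed.

Lemma adjoint_expansion w : Pa w = \sum_j (sg j * ipW w (frame j)) *: e j.
Proof. by rewrite {1}(hexp (Pa w)); apply: eq_bigr => j _; rewrite ip_adjoint_e. Qed.

Lemma S_expansion x : S x = \sum_j (sg j * ipV x (e j)) *: e j.
Proof. by rewrite {1}(hexp (S x)); apply: eq_bigr => j _; rewrite hSs hSe ipZr. Qed.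

Definition range_proj w := \sum_j (supp j * ipW w (frame j)) *: frame j.

Lemma ip_range_proj w w' :
  ipW (range_proj w) w' = \sum_j supp j * ipW w (frame j) * ipW w' (frame j).
Proof. by rewrite ip_sumZl //; apply: eq_bigr => j _; rewrite (ipC hipW (frame j)). Qed.

Lemma range_proj_selfadjoint : selfadjoint ipW range_proj.
Proof.
move=> w w'; rewrite ip_range_proj (ipC hipW) ip_range_proj.
by apply: eq_bigr => j _; ring.
Qed.

Lemma range_proj_sqnorm w :
  ipW (range_proj w) (range_proj w) = \sum_j supp j * ipW w (frame j) ^+ 2.
Proof.
rewrite ip_range_proj; apply: eq_bigr => j _; rewrite ip_sum_frame.
transitivity (supp j * supp j * supp j * ipW w (frame j) ^+ 2); first by ring.
by rewrite !supp_idem.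
Qed.

Lemma range_proj_norm w : ipW (range_proj w) (range_proj w) <= ipW w w.
Proof.
have hwP : ipW w (range_proj w) = ipW (range_proj w) (range_proj w).
  by rewrite range_proj_sqnorm (ipC hipW) ip_range_proj; apply: eq_bigr => j _; ring.
have := ip_ge0 hipW (w - range_proj w).
by rewrite !ipBl // !ipBr // (ipC hipW (range_proj w) w) hwP; lra.
Qed.

Lemma range_proj_Phi x : range_proj (Phi x) = Phi x.
Proof.
rewrite {2}Phi_expansion; apply: eq_bigr => k _.
rewrite {1}Phi_expansion ip_sum_frame; congr (_ *: _).
transitivity (ipV x (e k) * (sg k * (supp k * supp k))); first by ring.
by rewrite supp_idem sg_supp.
Qed.

Lemma parseval z : ipV z z = \sum_j ipV z (e j) ^+ 2.
Proof. by rewrite {2}(hexp z) ip_sumZr //; apply: eq_bigr => j _; rewrite expr2. Qed.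

(* [polar] and [polar_adj] are the partial isometry J of the polar decomposition
   Phi = J S and its adjoint. *)
Definition polar z := \sum_j (supp j * ipV z (e j)) *: frame j.
Definition polar_adj w := \sum_j (supp j * ipW w (frame j)) *: e j.

Lemma adjoint_polar z : Pa (polar z) = S z.
Proof.
rewrite adjoint_expansion S_expansion; apply: eq_bigr => j _.
rewrite ip_sum_frame; congr (_ *: _).
transitivity ((sg j * supp j) * supp j * ipV z (e j)); first by ring.
by rewrite !sg_supp.
Qed.

Lemma polar_contraction z : ipnorm ipW (polar z) <= ipnorm ipV z.
Proof.
rewrite /ipnorm ler_sqrt ?ip_ge0 // parseval {1}/polar ip_sumZr //.
apply: ler_sum => j _; rewrite ip_sum_frame.
have [->|->] := supp01 j; first by rewrite !mul0r sqr_ge0.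
by rewrite !mul1r mulr1 expr2.
Qed.

Lemma S_polar_adj w : S (polar_adj w) = Pa w.
Proof.
rewrite S_expansion adjoint_expansion; apply: eq_bigr => j _.
by rewrite orthonormal_coef // mulrA sg_supp.
Qed.

Lemma polar_adj_contraction w : ipnorm ipV (polar_adj w) <= ipnorm ipW w.
Proof.
rewrite /ipnorm ler_sqrt ?ip_ge0 //; apply: le_trans (range_proj_norm w).
rewrite orthonormal_ip_sum // range_proj_sqnorm le_eqVlt; apply/orP; left.
apply/eqP/eq_bigr => j _.
by rewrite -[in RHS]supp_idem; ring.
Qed.

Lemma compress_bounded (A : V -> V) : is_linear A ->
  exists C, forall w, ipnorm ipW (Phi (A (Pa w))) <= C * ipnorm ipW w.
Proof.
move=> hA; have hS := selfadjoint_linear hipV hSs.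
have [C C0 hC] := linear_bounded hipV hipV (is_linear_comp hS (is_linear_comp hA hS)).
exists C => w; rewrite -S_polar_adj ipnorm_Phi.
by apply: le_trans (hC _) _; rewrite ler_wpM2l // polar_adj_contraction.
Qed.

(* Since Phi = J S and S = J^* Phi, each of the two compressions factors
   through the other by contractions. *)
Lemma opnorm_compress (A : V -> V) : is_linear A ->
  opnorm ipW ipW (Phi \o A \o Pa) = opnorm ipV ipV (S \o A \o S).
Proof.
move=> hA; have hS := selfadjoint_linear hipV hSs.
have [C _ hC] := linear_bounded hipV hipV (is_linear_comp hS (is_linear_comp hA hS)).
have [C' hC'] := compress_bounded hA.
apply/le_anti/andP; split.
  apply: (opnorm_le hipW) => w hw /=.
  rewrite -S_polar_adj ipnorm_Phi; apply: (opnorm_ub (A := S \o A \o S) hC).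
  exact: le_trans (polar_adj_contraction w) hw.
apply: (opnorm_le hipV) => z hz /=.
rewrite -ipnorm_Phi -adjoint_polar; apply: (opnorm_ub (A := Phi \o A \o Pa) hC').
exact: le_trans (polar_contraction z) hz.
Qed.

(* [pinv] is the Moore-Penrose pseudo-inverse of Phi, and [pinv_adj] its adjoint. *)
Definition pinv w := \sum_j ((sg j)^-1 * ipW w (frame j)) *: e j.
Definition pinv_adj z := \sum_j ((sg j)^-1 * ipV z (e j)) *: frame j.

Lemma pinvP w z : ipV (pinv w) z = ipW w (pinv_adj z).
Proof.
rewrite ip_sumZl // ip_sumZr //; apply: eq_bigr => j _.
by rewrite (ipC hipV (e j)); ring.
Qed.

Lemma pinv_linear : is_linear pinv.
Proof.
move=> a w w'; apply: (ip_ext hipV) => z.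
by rewrite pinvP ipDl // ipZl // -!pinvP ipDl // ipZl.
Qed.

Lemma pinv_adj_linear : is_linear pinv_adj.
Proof.
move=> a z z'; apply: (ip_ext hipW) => w.
by rewrite !(ipC hipW _ w) -pinvP ipDr // ipZr // !pinvP ipDr // ipZr.
Qed.

Lemma Phi_pinv w : Phi (pinv w) = range_proj w.
Proof.
rewrite Phi_expansion; apply: eq_bigr => j _.
by rewrite orthonormal_coef // /supp; congr (_ *: _); ring.
Qed.

Lemma pinv_adj_adjoint w : pinv_adj (Pa w) = range_proj w.
Proof.
apply: eq_bigr => j _; rewrite ip_adjoint_e /supp; congr (_ *: _); ring.
Qed.

(* Witness M = pinv Q pinv_adj, for which Phi M Pa = P Q P with P = range_proj. *)
Lemma exists_compression (Q : W -> W) : is_Bplus ipW Q ->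
  exists M, [/\ is_Bplus ipV M,
    forall x x', ipW ((Phi \o M \o Pa) (Phi x)) (Phi x') = ipW (Q (Phi x)) (Phi x') &
    opnorm ipW ipW (Phi \o M \o Pa) <= opnorm ipW ipW Q].
Proof.
move=> [[hQ [C hC]] hQn].
pose M := pinv \o Q \o pinv_adj.
have hMP w : (Phi \o M \o Pa) w = range_proj (Q (range_proj w)).
  by rewrite /= Phi_pinv pinv_adj_adjoint.
exists M; split.
- split; last by move=> z; rewrite /= pinvP.
  exact/bounded_of_linear/is_linear_comp/pinv_adj_linear/is_linear_comp/hQ/pinv_linear.
- by move=> x x'; rewrite hMP range_proj_Phi range_proj_selfadjoint range_proj_Phi.
have contraction w : ipnorm ipW (range_proj w) <= ipnorm ipW w.
  by rewrite /ipnorm ler_sqrt ?ip_ge0 ?range_proj_norm.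
apply: (opnorm_le hipW) => w hw; rewrite hMP; apply: le_trans (contraction _) _.
by apply: (opnorm_ub hC); apply: le_trans (contraction w) hw.
Qed.

End Polar.

Definition is_minimizer (R : realType) (T : Type) (C : T -> Prop) (f : T -> R) (x : T) :=
  C x /\ forall x', C x' -> f x <= f x'.

Lemma is_minimizer_eq (R : realType) (T : Type) (C : T -> Prop) (f g : T -> R) :
  (forall x, C x -> f x = g x) -> forall x, is_minimizer C f x <-> is_minimizer C g x.
Proof.
move=> hfg x; split=> -[hx hmin]; split=> // x' hx'.
  by rewrite -!hfg //; apply: hmin.
by rewrite !hfg //; apply: hmin.
Qed.

Section Representer.
Variables (R : realType) (V : vectType R) (ipV : V -> V -> R).
Hypothesis hipV : is_inner_product ipV.
Variables (W : lmodType R) (ipW : W -> W -> R).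
Hypothesis hipW : is_inner_product ipW.
Variable Phi : V -> W.
Hypothesis hPhi : is_linear Phi.
Local Notation Pa := (adjoint ipV ipW Phi).
Local Notation S := (op_sqrt ipV (Pa \o Phi)).

Lemma gram_selfadjoint : selfadjoint ipV (Pa \o Phi).
Proof.
move=> x y; rewrite /= (adjointP hipV hipW hPhi) (ipC hipV x).
by rewrite (adjointP hipV hipW hPhi) (ipC hipW).
Qed.

Lemma gram_sqrtP : selfadjoint ipV S /\ forall x, S (S x) = Pa (Phi x).
Proof.
have [[hS _] hSS _ hSK] : [/\ is_bounded_op ipV ipV S, adjoint ipV ipV S = S,
    is_nonneg_op ipV S & S \o S = Pa \o Phi].
  apply: (op_sqrtP hipV gram_selfadjoint) => x.
  by rewrite /= (adjointP hipV hipW hPhi) ip_ge0.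
split; first exact: (selfadjoint_adjoint hipV hS hSS).
by move=> x; exact: (congr1 (fun f => f x) hSK).
Qed.

Lemma opnorm_compress_sqrt (A : V -> V) : is_linear A ->
  opnorm ipW ipW (Phi \o A \o Pa) = opnorm ipV ipV (S \o A \o S).
Proof.
have [hSs hSS] := gram_sqrtP.
have [d [e [sg [he hSe hexp]]]] := selfadjoint_eigenbasis hipV hSs.
exact: (opnorm_compress hipV hipW hPhi hSs hSS he hSe hexp).
Qed.

Lemma compress_Bplus (M : V -> V) : is_Bplus ipV M -> is_Bplus ipW (Phi \o M \o Pa).
Proof.
move=> [[hM _] hMn]; have [hSs hSS] := gram_sqrtP.
have [d [e [sg [he hSe hexp]]]] := selfadjoint_eigenbasis hipV hSs.
split; last by move=> w; rewrite /= (ipC hipW) -(adjointP hipV hipW hPhi) (ipC hipV).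
split; first exact/is_linear_comp/(adjoint_linear hipV hipW hPhi)/is_linear_comp.
exact: (compress_bounded hipV hipW hPhi hSs hSS he hSe hexp hM).
Qed.

(* Compressing a minimiser to the range of Phi keeps the data term and does not
   increase the norm, so the minimum is attained on operators Phi M Pa. *)
Theorem representer (L : (W -> W) -> R) (gamma : R) : 0 <= gamma ->
  (forall Q Q', (forall x x', ipW (Q (Phi x)) (Phi x') = ipW (Q' (Phi x)) (Phi x')) ->
     L Q = L Q') ->
  let F Q := L Q + gamma * opnorm ipW ipW Q in
  (exists Q, is_minimizer (is_Bplus ipW) F Q) ->
  (exists M, is_minimizer (is_Bplus ipV) (fun M => F (Phi \o M \o Pa)) M) /\
  forall M, is_minimizer (is_Bplus ipV) (fun M => F (Phi \o M \o Pa)) M ->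
    is_minimizer (is_Bplus ipW) F (Phi \o M \o Pa).
Proof.
move=> hgamma hL F [Q0 [hQ0 hQ0min]].
have [hSs hSS] := gram_sqrtP.
have [d [e [sg [he hSe hexp]]]] := selfadjoint_eigenbasis hipV hSs.
have [M0 [hM0 hagree hnorm]] := exists_compression hipV hipW hPhi hSs hSS he hSe hexp hQ0.
have hFM0 : F (Phi \o M0 \o Pa) <= F Q0 by rewrite /F (hL _ _ hagree) lerD2l ler_wpM2l.
have hFQ0 M : is_Bplus ipV M -> F Q0 <= F (Phi \o M \o Pa).
  by move=> hM; apply/hQ0min/compress_Bplus.
split; first by exists M0; split=> // M hM; apply: le_trans hFM0 (hFQ0 _ hM).
move=> M [hM hMmin]; split; first exact: compress_Bplus.
by move=> Q hQ; apply: le_trans (hMmin _ hM0) (le_trans hFM0 (hQ0min _ hQ)).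
Qed.

End Representer.

Lemma ip_pow_inner_product (R : realType) (U : lmodType R) (ipU : U -> U -> R)
  (hipU : is_inner_product ipU) (n : nat) : is_inner_product (ip_pow ipU (n := n)).
Proof.
split.
- by move=> x y; apply: eq_bigr => i _; apply: ipC.
- move=> a x y z; rewrite mulr_sumr -big_split /=; apply: eq_bigr => i _.
  by rewrite !ffunE ipDl // ipZl.
- by move=> x; apply: sumr_ge0 => i _; apply: ip_ge0.
- move=> x hx; apply/ffunP => i; rewrite ffunE; apply: (ip_eq0 hipU).
  have hge (k : 'I_n) : true -> 0 <= ipU (x k) (x k) by move=> _; apply: ip_ge0.
  exact: (@psumr_eq0P _ _ _ _ hge hx i isT).
Qed.

Unset Implicit Arguments.
Theorem corollary1 (R : realType)
  (U : vectType R) (ipU : U -> U -> R) (hU : is_hilbert ipU)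
  (W : lmodType R) (ipW : W -> W -> R) (hW : is_hilbert ipW)
  (phi : U -> U -> W)
  (hphi : forall v : U, is_bounded_op ipU ipW (phi v))
  (n : nat) (u y : 'I_n -> U) (gamma : R) (hgamma : 0 < gamma) :
  let ipUn := @ip_pow R U ipU n in
  let Phi : {ffun 'I_n -> U} -> W := fun v => \sum_(i < n) phi (u i) (v i) in
  let PhiA : W -> {ffun 'I_n -> U} := adjoint ipUn ipW Phi in
  let kappa : U -> U -> {ffun 'I_n -> U} := fun v => PhiA \o phi v in
  let Kb : 'I_n -> U -> {ffun 'I_n -> U} := fun i => kappa (u i) in
  let K : {ffun 'I_n -> U} -> {ffun 'I_n -> U} := PhiA \o Phi in
  let Ksq := op_sqrt ipUn K in
  let L : (W -> W) -> R := fun Q =>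
    \sum_(i < n) ipnorm ipU
       (adjoint ipU ipW (phi (u i)) (Q (phi (u i) (u i))) - y i) ^+ 2 in
  let objQ : (W -> W) -> R := fun Q => L Q + gamma * opnorm ipW ipW Q in
  let objM : ({ffun 'I_n -> U} -> {ffun 'I_n -> U}) -> R := fun M =>
    \sum_(i < n) ipnorm ipU
       (adjoint ipU ipUn (Kb i) (M (Kb i (u i))) - y i) ^+ 2
    + gamma * opnorm ipUn ipUn (Ksq \o M \o Ksq) in
  let solQ : (W -> W) -> Prop := fun Q =>
    is_Bplus ipW Q /\ forall Q', is_Bplus ipW Q' -> objQ Q <= objQ Q' in
  let solM : ({ffun 'I_n -> U} -> {ffun 'I_n -> U}) -> Prop := fun M =>
    is_Bplus ipUn M /\ forall M', is_Bplus ipUn M' -> objM M <= objM M' in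
  (exists Q, solQ Q) ->
  (exists M, solM M) /\
  forall M, solM M ->
    let Qhat := Phi \o M \o PhiA in
    solQ Qhat /\
    forall v : U,
      adjoint ipU ipW (phi v) (Qhat (phi v v))
      = adjoint ipU ipUn (kappa v) (M (kappa v v)).
Proof.
move=> ipUn Phi PhiA kappa Kb K Ksq L objQ objM solQ solM hQ.
have hipU : is_inner_product ipU := hU.1.
have hipW : is_inner_product ipW := hW.1.
have hipV : is_inner_product ipUn := ip_pow_inner_product hipU n.
have hphil v : is_linear (phi v) := (hphi v).1.
have hPhi : is_linear Phi.
  move=> a x x'; rewrite scaler_sumr -big_split; apply: eq_bigr => i _ /=.
  by rewrite !ffunE hphil.
have hdelta i x : phi (u i) x = Phi [ffun k => (k == i)%:R *: x].
  rewrite /Phi (bigD1 i) //= ffunE eqxx scale1r big1 ?addr0 // => k /negbTE hk.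
  by rewrite ffunE hk scale0r (is_linear0 (hphil _)).
have hL Q Q' : (forall x x', ipW (Q (Phi x)) (Phi x') = ipW (Q' (Phi x)) (Phi x')) ->
    L Q = L Q'.
  move=> hQQ; apply: eq_bigr => i _; congr (ipnorm _ (_ - _) ^+ 2).
  by apply: (ip_ext hipU) => x; rewrite !(adjointP hipU hipW (hphil _)) !hdelta hQQ.
have hsol M : solM M <-> is_minimizer (is_Bplus ipUn) (fun M => objQ (Phi \o M \o PhiA)) M.
  apply: is_minimizer_eq => {}M [[hM _] _].
  rewrite /objM /objQ (opnorm_compress_sqrt hipV hipW hPhi hM); congr (_ + _).
  by apply: eq_bigr => i _; rewrite (adjoint_comp hipU hipV hipW hPhi (hphil _)).
have [[M0 hM0] hrep] := representer hipV hipW hPhi (ltW hgamma) hL hQ.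
split; first by exists M0; apply/hsol.
move=> M /hsol hM Qhat; split; first exact: hrep.
by move=> v; rewrite (adjoint_comp hipU hipV hipW hPhi (hphil v)).
Qed.
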